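(* Let $P$ be a finite poset and $R$ a weakly-consistent restriction function on $P$. Then the poset $\Gamma'(P,R)$ is isomorphic to the dual of the poset of meet-irreducible elements of the lattice $\mathrm{WInc}^R(P)$. Consequently, the order ideals of $\Gamma'(P,R)$ are in bijection with $\mathrm{WInc}^R(P)$.
   Context: A restriction function assigns to each $p\in P$ a nonempty finite $R(p)\subseteq\mathbb{Z}$. It is weakly-consistent if for every cover $x\lessdot y$ in $P$, $\min R(x)\le\min R(y)$ and $\max R(x)\le\max R(y)$. $\mathrm{WInc}^R(P)$ is the set of $f:P\to\mathbb{Z}$ with $f(p)\in R(p)$ and $p_1<p_2\Rightarrow f(p_1)\le f(p_2)$, ordered pointwise (a distributive lattice with pointwise min/max). An element is meet-irreducible if it is not the top and $x=y\wedge z$ implies $x\in\{y,z\}$. $R(p)^*=R(p)\setminus\{\max R(p)\}$; $R(p)_{>k}$ is the smallest element of $R(p)$ greater than $k$; $R(p)_{\le k}$ is the largest element of $R(p)$ less than or equal to $k$. $\Gamma'(P,R)$ is the poset on $\{(p,k):p\in P,k\in R(p)^*\}$ whose order is the reflexive–transitive closure of the relation $(p_1,k_1)\lessdot(p_2,k_2)$, holding iff either (1) $p_1=p_2$ and $R(p_1)_{>k_2}=k_1$; or (2) $p_1\lessdot p_2$ in $P$, $R(p_1)_{\le k_2}=k_1$, and there is no $k\in R(p_2)$ with $k>k_2$ and $R(p_1)_{\le k}=k_1$. *)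

From HB Require Import structures.
From mathcomp Require Import all_boot all_order all_algebra.
From mathcomp Require Import finmap.
From Stdlib Require Import Relations.
Set Implicit Arguments. Unset Strict Implicit. Unset Printing Implicit Defensive.
Import Order.TTheory GRing.Theory Num.Theory.
Local Open Scope order_scope.
Local Open Scope fset_scope.

Section Defs.
Variables (d : Order.disp_t) (P : finPOrderType d).

Definition covers (x y : P) : bool :=
  (x < y) && [forall z : P, ~~ ((x < z) && (z < y))].

Definition smin (s : seq int) : int := foldr Order.min (head 0%R s) s.
Definition smax (s : seq int) : int := foldr Order.max (head 0%R s) s.

(* a restriction function: each R p is a nonempty finite subset of Z
   (represented by a list; only membership matters) *)
Definition restriction (R : P -> seq int) : Prop := forall p, R p != [::].

Definition weakly_consistent (R : P -> seq int) : Prop :=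
  forall x y : P, covers x y ->
    smin (R x) <= smin (R y) /\ smax (R x) <= smax (R y).

(* R(p)_{>k} = m : m is the smallest element of s greater than k *)
Definition next_gt (s : seq int) (k m : int) : bool :=
  [&& m \in s, k < m & all (fun j => (k < j) ==> (m <= j)) s].

(* R(p)_{<=k} = m : m is the largest element of s that is <= k *)
Definition prev_le (s : seq int) (k m : int) : bool :=
  [&& m \in s, m <= k & all (fun j => (j <= k) ==> (j <= m)) s].

Definition winc (R : P -> seq int) (f : {ffun P -> int}) : Prop :=
  (forall p, f p \in R p) /\ (forall p1 p2 : P, p1 < p2 -> f p1 <= f p2).

Definition ptle (f g : {ffun P -> int}) : Prop := forall p, f p <= g p.

Definition ptmeet (f g : {ffun P -> int}) : {ffun P -> int} :=
  [ffun p => Order.min (f p) (g p)].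

Definition meet_irreducible (R : P -> seq int) (f : {ffun P -> int}) : Prop :=
  [/\ winc R f,
      ~ (forall g, winc R g -> ptle g f)
    & forall g h, winc R g -> winc R h -> f = ptmeet g h -> f = g \/ f = h].

Definition inGamma (R : P -> seq int) (x : P * int) : bool :=
  (x.2 \in R x.1) && (x.2 != smax (R x.1)).

Definition Gamma (R : P -> seq int) := {x : P * int | inGamma R x}.

Definition gcover (R : P -> seq int) (x y : P * int) : Prop :=
  [/\ inGamma R x, inGamma R y &
   let: (p1, k1) := x in let: (p2, k2) := y in
   (p1 = p2 /\ next_gt (R p1) k2 k1) \/
   [/\ covers p1 p2, prev_le (R p1) k2 k1 &
       ~ (exists k, [/\ k \in R p2, k2 < k & prev_le (R p1) k k1])]].

Definition gle (R : P -> seq int) : relation (P * int) :=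
  clos_refl_trans (P * int) (gcover R).

Definition order_ideal (R : P -> seq int) (I : {fset (P * int)}) : Prop :=
  (forall x, x \in I -> inGamma R x) /\
  (forall x y, inGamma R x -> y \in I -> gle R x y -> x \in I).

End Defs.

From HB Require Import structures.
From mathcomp Require Import all_boot all_order all_algebra.
From mathcomp Require Import finmap zify boolp.
From Stdlib Require Import Relations.
Set Implicit Arguments. Unset Strict Implicit. Unset Printing Implicit Defensive.
Import Order.TTheory GRing.Theory Num.Theory.
Local Open Scope order_scope.

(* An element (p, k) of Gamma'(P,R) stands for the constraint f(p) <= k on
   f in WInc^R(P).  The constraints satisfied by f form an order ideal of
   Gamma'(P,R); conversely an order ideal I gives back
   f_I(q) = min {k | (q, k) in I}, or max R(q) when there is no such k, and
   weak consistency is exactly what makes f_I weakly increasing along the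
   covers of P.  Writing f_b for f_I with I the principal ideal of b, f_b is
   the largest f with f(b.1) <= b.2, hence meet-irreducible, and b <= b' iff
   f_b' <= f_b.  Every f is the meet of the f_(q, f q) over the points (q, f q)
   of Gamma'(P,R), so a meet-irreducible f is one of them. *)

Section SeqExtrema.
Variables (disp : Order.disp_t) (T : orderType disp).
Implicit Types (x y z : T) (s : seq T).

Lemma foldr_min_in x s : foldr Order.min x s \in x :: s.
Proof.
elim: s => [|y s IH] /=; first exact: mem_head.
rewrite !inE minElt; case: ifP => _; first by rewrite eqxx orbT.
by move: IH; rewrite inE => /orP[] ->; rewrite ?orbT.
Qed.

Lemma foldr_max_in x s : foldr Order.max x s \in x :: s.
Proof.
elim: s => [|y s IH] /=; first exact: mem_head.
rewrite !inE maxElt; case: ifP => _; last by rewrite eqxx orbT.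
by move: IH; rewrite inE => /orP[] ->; rewrite ?orbT.
Qed.

Lemma le_foldr_min z x s : (z <= foldr Order.min x s) = all (>= z) (x :: s).
Proof. by elim: s => [|y s IH] /=; rewrite ?andbT // le_min IH /= andbCA. Qed.

Lemma foldr_max_le z x s : (foldr Order.max x s <= z) = all (<= z) (x :: s).
Proof. by elim: s => [|y s IH] /=; rewrite ?andbT // ge_max IH /= andbCA. Qed.

Lemma foldr_min_le y x s : y \in x :: s -> foldr Order.min x s <= y.
Proof.
by move: (le_foldr_min (foldr Order.min x s) x s); rewrite lexx => /esym/allP; apply.
Qed.

Lemma le_foldr_max y x s : y \in x :: s -> y <= foldr Order.max x s.
Proof.
by move: (foldr_max_le (foldr Order.max x s) x s); rewrite lexx => /esym/allP; apply.
Qed.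

Lemma seq_argmax (a : pred T) x s : x \in s -> a x ->
  exists2 y, (y \in s) && a y & forall z, z \in s -> a z -> z <= y.
Proof.
move=> xs ax; exists (foldr Order.max x [seq z <- s | a z]).
  have := foldr_max_in x [seq z <- s | a z].
  by rewrite inE mem_filter => /orP[/eqP->|/andP[-> ->]]; rewrite ?xs ?ax.
by move=> z zs az; apply: le_foldr_max; rewrite inE mem_filter az zs orbT.
Qed.

End SeqExtrema.

Lemma smin_mem s : s != [::] -> smin s \in s.
Proof.
case: s => [//|x s] _; rewrite /smin [head _ _]/=; have := foldr_min_in x (x :: s).
by rewrite [in X in X -> _]inE => /orP[/eqP->|//]; apply: mem_head.
Qed.

Lemma smax_mem s : s != [::] -> smax s \in s.
Proof.
case: s => [//|x s] _; rewrite /smax [head _ _]/=; have := foldr_max_in x (x :: s).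
by rewrite [in X in X -> _]inE => /orP[/eqP->|//]; apply: mem_head.
Qed.

Lemma smin_le s j : j \in s -> smin s <= j.
Proof. by case: s => [//|x s] js; apply: foldr_min_le; rewrite inE js orbT. Qed.

Lemma smax_ge s j : j \in s -> j <= smax s.
Proof. by case: s => [//|x s] js; apply: le_foldr_max; rewrite inE js orbT. Qed.

Lemma lt_cover_ind d (P : finPOrderType d) (Q : P -> P -> Prop) :
    (forall x y z, Q x y -> Q y z -> Q x z) -> (forall x y, covers x y -> Q x y) ->
  forall x y, x < y -> Q x y.
Proof.
move=> Qtr Qcov.
suff Qn n (x y : P) : (#|[pred z | (x < z < y)%O]| < n)%N -> x < y -> Q x y.
  by move=> x y; apply: Qn.
elim: n x y => [//|n IH] x y n_gt xy.
have [|] := boolP (covers x y); first exact: Qcov.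
rewrite /covers xy negb_forall => /existsP[z]; rewrite negbK => /andP[xz zy].
apply: (Qtr _ z); apply: IH => //; rewrite -ltnS; apply: leq_trans n_gt; apply: proper_card.
  apply/properP; split; last by exists z; rewrite !inE ?ltxx ?andbF ?xz ?zy.
  by apply/subsetP => w; rewrite !inE => /andP[-> /lt_trans->].
apply/properP; split; last by exists z; rewrite !inE ?ltxx ?xz ?zy.
by apply/subsetP => w; rewrite !inE => /andP[/(lt_trans xz)-> ->].
Qed.

Section Gamma.
Variables (d : Order.disp_t) (P : finPOrderType d) (R : P -> seq int).
Hypotheses (R_ne : restriction R) (R_wc : weakly_consistent R).
Implicit Types (f g : {ffun P -> int}) (x y a b : P * int) (I : pred (P * int)).

Lemma inGammaE p k : inGamma R (p, k) = (k \in R p) && (k < smax (R p)).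
Proof. by rewrite /inGamma /=; case kR: (k \in R p); rewrite // lt_neqAle smax_ge ?andbT. Qed.

Lemma smax_mono p1 p2 : p1 < p2 -> smax (R p1) <= smax (R p2).
Proof.
apply: (lt_cover_ind (Q := fun p1 p2 => smax (R p1) <= smax (R p2))).
  by move=> ? ? ?; apply: le_trans.
by move=> ? ? /R_wc[].
Qed.

Lemma gle_column q k k' : inGamma R (q, k) -> k' \in R q -> k' <= k -> gle R (q, k) (q, k').
Proof.
suff gle_n (n : nat) : forall k k', inGamma R (q, k) -> k' \in R q -> k' <= k ->
    (k - k' < n%:Z)%R -> gle R (q, k) (q, k').
  by move=> qk k'R k'k; apply: (gle_n `|k - k'|.+1) => //; lia.
elim: n => [|n IH] {}k {}k' qk k'R; first lia.
rewrite le_eqVlt => /predU1P[-> _|k'k dist]; first exact: rt_refl.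
have /andP[kR k_lt] : (k \in R q) && (k < smax (R q)) by rewrite -inGammaE.
have [/hasP[j jR /andP[k'j jk]]|none] := boolP (has (fun j => k' < j < k) (R q)).
  have qj : inGamma R (q, j) by rewrite inGammaE jR (lt_trans jk k_lt).
  by apply: (rt_trans _ _ _ (q, j)); apply: IH; rewrite ?ltW //; lia.
apply: rt_step; split => //; first by rewrite inGammaE k'R (lt_trans k'k k_lt).
left; split => //.
rewrite /next_gt kR k'k; apply/allP => j jR; apply/implyP => k'j.
by rewrite leNgt; apply: contra none => jk; apply/hasP; exists j; rewrite ?k'j.
Qed.

(* Each generating cover strictly increases this lexicographic key. *)
Definition gamma_key x : P *l int := (x.1, - x.2)%R.

Lemma gle_key x y : gle R x y -> gamma_key x <= gamma_key y.
Proof.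
elim=> [{}x {}y|//|{}x {}y z _ xy _ yz]; last exact: le_trans xy yz.
case: x y => [p1 k1] [p2 k2] [_ _ [[<- /and3P[_ lt _]]|[/andP[lt _] _ _]]];
  by rewrite lexi_pair /= ?lexx ?lerN2 ?(ltW lt) // lt_geF.
Qed.

Lemma gle_anti x y : gle R x y -> gle R y x -> x = y.
Proof.
move=> /gle_key xy /gle_key yx; have := le_anti (introT andP (conj xy yx)).
by case: x y {xy yx} => [p k] [p' k'] [-> /oppr_inj->].
Qed.

Definition down_closed (I : pred (P * int)) : Prop :=
  (forall x, I x -> inGamma R x) /\ (forall x y, inGamma R x -> I y -> gle R x y -> I x).

Definition ideal_of f : pred (P * int) := [pred x | inGamma R x & f x.1 <= x.2].

Lemma ideal_of_gle f x y : winc R f -> gle R x y -> ideal_of f y -> ideal_of f x.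
Proof.
move=> [fR f_mono]; elim=> [{}x {}y|//|{}x {}y z _ IHxy _ IHyz]; last by move/IHyz/IHxy.
case: x y => [p1 k1] [p2 k2] [xG _ H] /andP[_ /= fk2]; rewrite /ideal_of /= xG /=.
case: H => [[-> /and3P[_ lt _]]|[/andP[lt _] /and3P[_ _ /allP k1max] _]].
  exact: le_trans fk2 (ltW lt).
by have := k1max _ (fR p1); rewrite (le_trans (f_mono _ _ lt) fk2).
Qed.

Lemma ideal_of_down_closed f : winc R f -> down_closed (ideal_of f).
Proof. by move=> wf; split=> [x /andP[]//|x y _ yI xy]; apply: ideal_of_gle xy yI. Qed.

Definition winc_of (I : pred (P * int)) : {ffun P -> int} :=
  [ffun q => foldr Order.min (smax (R q)) [seq k <- R q | I (q, k)]].

Lemma winc_of_le I q k : I (q, k) -> k \in R q -> winc_of I q <= k.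
Proof. by move=> Ik kR; rewrite ffunE foldr_min_le // inE mem_filter Ik kR orbT. Qed.

Lemma winc_of_le_smax I q : winc_of I q <= smax (R q).
Proof. by rewrite ffunE foldr_min_le ?mem_head. Qed.

Lemma winc_ofP I q :
  winc_of I q = smax (R q) \/ (winc_of I q \in R q) && I (q, winc_of I q).
Proof.
have := foldr_min_in (smax (R q)) [seq k <- R q | I (q, k)].
by rewrite ffunE inE mem_filter andbC => /orP[/eqP|]; [left|right].
Qed.

Lemma gle_cover_lift p1 p2 c : covers p1 p2 -> inGamma R (p2, c) ->
  exists2 k, (k \in R p1) && (k <= c) & inGamma R (p1, k) -> gle R (p1, k) (p2, c).
Proof.
(* k = R(p1)_{<=c} and K = max {j in R(p2) | R(p1)_{<=j} = k}: then (p1, k) is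
   covered by (p2, K), which lies above (p2, c) in its column. *)
move=> p12; have [wmin wmax] := R_wc p12; rewrite inGammaE => /andP[cR c_lt].
have [k /andP[kR kc] kmax] :=
  seq_argmax (a := <= c) (smin_mem (R_ne p1)) (le_trans wmin (smin_le cR)).
move: kc kmax => /= kc kmax.
exists k; rewrite ?kR ?kc // inGammaE kR /= => k_lt.
have k_prev_c : prev_le (R p1) c k.
  by rewrite /prev_le kR kc; apply/allP => j jR; apply/implyP; apply: kmax.
have [K /andP[KR k_prev_K] Kmax] :=
  seq_argmax (a := fun j => prev_le (R p1) j k) cR k_prev_c.
have K_lt : K < smax (R p2).
  rewrite lt_neqAle smax_ge // andbT; apply: contraTneq k_prev_K => ->.
  apply/negP => /and3P[_ _ /allP/(_ _ (smax_mem (R_ne p1)))].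
  by rewrite wmax leNgt k_lt.
apply: (rt_trans _ _ _ (p2, K)); last first.
  by apply: gle_column; rewrite ?inGammaE ?KR ?K_lt ?Kmax.
apply: rt_step; split; rewrite ?inGammaE ?kR ?KR //; right; split=> // -[j [jR Kj k_prev_j]].
by have := Kmax _ jR k_prev_j; rewrite leNgt Kj.
Qed.

Lemma winc_of_winc I : down_closed I -> winc R (winc_of I).
Proof.
move=> [I_sub I_down]; split=> [q|].
  by case: (winc_ofP I q) => [->|/andP[]//]; apply: smax_mem.
apply: lt_cover_ind => [???|p1 p2 p12]; first exact: le_trans.
case: (winc_ofP I p2) => [->|/andP[_ Ic]].
  by apply: le_trans (winc_of_le_smax _ _) _; have [] := R_wc p12.
have [k /andP[kR kc] lift] := gle_cover_lift p12 (I_sub _ Ic).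
apply: le_trans kc; have [k_in|k_out] := boolP (inGamma R (p1, k)).
  exact: winc_of_le (I_down _ _ k_in Ic (lift k_in)) kR.
by apply: le_trans (winc_of_le_smax _ _) _; move: k_out; rewrite inGammaE kR -leNgt.
Qed.

Lemma ideal_of_winc_of I : down_closed I -> ideal_of (winc_of I) =1 I.
Proof.
move=> [I_sub I_down] [q k]; apply/idP/idP => [/andP[/= qk le_k]|Ik]; last first.
  by rewrite /ideal_of /= I_sub //= winc_of_le //; have /andP[] := I_sub _ Ik.
case: (winc_ofP I q) => [E|/andP[cR Ic]].
  by move: qk; rewrite inGammaE -E ltNge le_k andbF.
by apply: (I_down _ _ qk Ic); apply: gle_column.
Qed.

Lemma ideal_of_subset_le f g : winc R f -> winc R g ->
  {subset ideal_of f <= ideal_of g} -> ptle g f.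
Proof.
move=> [fR _] [gR _] fg q; have [qf|] := boolP (inGamma R (q, f q)).
  by have /andP[] := fg (q, f q) (introT andP (conj qf (lexx _))).
by rewrite inGammaE fR -leNgt; apply: le_trans; apply: smax_ge.
Qed.

Lemma ideal_of_inj f g : winc R f -> winc R g -> ideal_of f =1 ideal_of g -> f = g.
Proof.
move=> wf wg fg; apply/ffunP => q; apply: le_anti.
rewrite (ideal_of_subset_le wg wf) ?(ideal_of_subset_le wf wg) // => x.
  by rewrite -!topredE /= fg.
by rewrite -!topredE /= fg.
Qed.

Definition principal b : pred (P * int) := [pred x | inGamma R x & `[< gle R x b >]].

Lemma principal_down_closed b : down_closed (principal b).
Proof.
split=> [x /andP[]//|x y xG /andP[_ /asboolP yb] xy].
by rewrite /principal /= xG; apply/asboolP; apply: rt_trans xy yb.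
Qed.

Lemma winc_of_principal_winc b : winc R (winc_of (principal b)).
Proof. exact/winc_of_winc/principal_down_closed. Qed.

Lemma principalE b x :
  principal b x = inGamma R x && (winc_of (principal b) x.1 <= x.2).
Proof. by rewrite -(ideal_of_winc_of (principal_down_closed b)). Qed.

Lemma winc_of_principal_at b : inGamma R b -> winc_of (principal b) b.1 <= b.2.
Proof.
move=> bG; have := principalE b b; rewrite /principal /= bG.
by have /asboolP -> : gle R b b by apply: rt_refl.
Qed.

Lemma winc_of_principal_max b g :
  winc R g -> inGamma R b -> g b.1 <= b.2 -> ptle g (winc_of (principal b)).
Proof.
move=> wg bG gb; apply: ideal_of_subset_le => //.
  exact: winc_of_principal_winc.
move=> x; rewrite -topredE /= (ideal_of_winc_of (principal_down_closed b)).
move=> /andP[_ /asboolP xb]; apply: ideal_of_gle wg xb _.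
by rewrite /ideal_of /= bG.
Qed.

Lemma gle_winc_of_principal a b : inGamma R a -> inGamma R b ->
  gle R a b <-> ptle (winc_of (principal b)) (winc_of (principal a)).
Proof.
move=> aG bG; split=> [ab|ba].
  apply: (winc_of_principal_max (winc_of_principal_winc b) aG).
  by have := principalE b a; rewrite /principal /= aG /= => <-; apply/asboolP.
have := principalE b a; rewrite aG (le_trans (ba a.1) (winc_of_principal_at aG)).
by move=> /andP[_ /asboolP].
Qed.

Definition winc_top : {ffun P -> int} := [ffun q => smax (R q)].

Lemma winc_top_winc : winc R winc_top.
Proof. by split=> [q|p1 p2 lt12]; rewrite !ffunE ?smax_mem ?smax_mono. Qed.

Lemma winc_le_top f : winc R f -> ptle f winc_top.
Proof. by move=> [fR _] q; rewrite ffunE smax_ge. Qed.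

Lemma ptmeet_winc f g : winc R f -> winc R g -> winc R (ptmeet f g).
Proof.
move=> [fR f_mono] [gR g_mono]; split=> [p|p1 p2 lt12]; rewrite !ffunE.
  by case: leP => _; [apply: fR|apply: gR].
by rewrite le_min !ge_min f_mono // g_mono // orbT.
Qed.

Lemma winc_of_principal_meet_irreducible b :
  inGamma R b -> meet_irreducible R (winc_of (principal b)).
Proof.
case: b => p k bG; have /= b_at := winc_of_principal_at bG.
split; first exact: winc_of_principal_winc.
  move=> /(_ _ winc_top_winc p); rewrite ffunE => top_le.
  by move: bG; rewrite inGammaE ltNge (le_trans top_le b_at) andbF.
move=> g h wg wh E; move: b_at; rewrite {1}E ffunE ge_min => /orP[gb|hb]; [left|right];
  apply/ffunP => q; apply: le_anti.
  by rewrite (winc_of_principal_max wg bG gb q) andbT E ffunE ge_min lexx.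
by rewrite (winc_of_principal_max wh bG hb q) andbT E ffunE ge_min lexx orbT.
Qed.

Lemma foldr_ptmeetE g L q :
  foldr (@ptmeet _ P) g L q = foldr Order.min (g q) [seq h q | h : {ffun P -> int} <- L].
Proof. by elim: L => //= h L IH; rewrite ffunE IH. Qed.

Lemma winc_meet_principal f : winc R f ->
  f = foldr (@ptmeet _ P) winc_top
        [seq winc_of (principal (q, f q)) | q <- enum P & inGamma R (q, f q)].
Proof.
move=> wf; apply/ffunP => q; rewrite foldr_ptmeetE ffunE; apply: le_anti.
rewrite le_foldr_min /= smax_ge ?wf.1 //=; apply/andP; split.
  apply/allP => _ /mapP[_ /mapP[p + ->] ->]; rewrite mem_filter => /andP[pG _].
  exact: winc_of_principal_max wf pG (lexx _) q.
have [qG|] := boolP (inGamma R (q, f q)).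
  apply: le_trans (winc_of_principal_at qG); apply: foldr_min_le.
  rewrite inE; apply/orP; right; apply: (map_f (fun h : {ffun P -> int} => h q)).
  by apply: map_f; rewrite mem_filter qG mem_enum.
by rewrite /inGamma /= wf.1 negbK => /eqP->; apply: foldr_min_le; apply: mem_head.
Qed.

Lemma foldr_ptmeet_winc L :
  {in L, forall g, winc R g} -> winc R (foldr (@ptmeet _ P) winc_top L).
Proof.
elim: L => [_|g L IH wL] /=; first exact: winc_top_winc.
apply: ptmeet_winc; first by apply: wL; rewrite mem_head.
by apply: IH => h hL; apply: wL; rewrite inE hL orbT.
Qed.

Lemma meet_irreducible_in_meet f L : meet_irreducible R f ->
  {in L, forall g, winc R g} -> f = foldr (@ptmeet _ P) winc_top L -> f \in L.
Proof.
move=> [wf not_top f_irr]; elim: L => [_ f_top|g L IH wL] /=.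
  by case: not_top => g /winc_le_top; rewrite f_top.
have wL' : {in L, forall h, winc R h} by move=> h hL; apply: wL; rewrite inE hL orbT.
have wg := wL _ (mem_head _ _).
move=> /(f_irr _ _ wg (foldr_ptmeet_winc wL'))[->|/(IH wL') fL]; first exact: mem_head.
by rewrite inE fL orbT.
Qed.

Lemma meet_irreducible_principal f : meet_irreducible R f ->
  exists2 b, inGamma R b & f = winc_of (principal b).
Proof.
move=> f_irr; have [wf _ _] := f_irr.
have wL : {in [seq winc_of (principal (q, f q)) | q <- enum P & inGamma R (q, f q)],
            forall g, winc R g}.
  by move=> _ /mapP[q _ ->]; apply: winc_of_principal_winc.
have /mapP[q] := meet_irreducible_in_meet f_irr wL (winc_meet_principal wf).
by rewrite mem_filter => /andP[qG _] ->; exists (q, f q).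
Qed.

Local Open Scope fset_scope.

Definition ideal_fset f : {fset P * int} :=
  [fset x in [seq (q, k) | q <- enum P, k <- R q] | ideal_of f x].

Lemma in_ideal_fset f x : (x \in ideal_fset f) = ideal_of f x.
Proof.
rewrite !inE /=; case xI: (ideal_of f x); rewrite ?andbF //= andbT.
case: x xI => q k /andP[/andP[/= kR _] _].
by apply/allpairsPdep; exists q, k; rewrite mem_enum.
Qed.
End Gamma.

Unset Implicit Arguments.

Theorem theorem2p25 (d : Order.disp_t) (P : finPOrderType d)
    (R : P -> seq int) :
  restriction R -> weakly_consistent R ->
  (* Gamma'(P,R) is isomorphic to the dual of the poset of meet-irreducibles *)
  (exists phi : Gamma R -> {ffun P -> int},
     [/\ forall a, meet_irreducible R (phi a),
         injective phi,
         forall f, meet_irreducible R f -> exists a, phi a = f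
       & forall a b, gle R (val a) (val b) <-> ptle (phi b) (phi a)]) /\
  (* order ideals of Gamma'(P,R) are in bijection with WInc^R(P) *)
  (exists Phi : {ffun P -> int} -> {fset (P * int)},
     [/\ forall f, winc R f -> order_ideal R (Phi f),
         forall f g, winc R f -> winc R g -> Phi f = Phi g -> f = g
       & forall I, order_ideal R I -> exists2 f, winc R f & Phi f = I]).
Proof.
move=> R_ne R_wc; split.
  exists (fun a => winc_of R (principal R (val a))); split.
  - by move=> a; apply: winc_of_principal_meet_irreducible (valP a).
  - move=> a b ab; apply/val_inj/gle_anti;
      by apply/(gle_winc_of_principal R_ne R_wc (valP _) (valP _)); rewrite ab.
  - move=> f /(meet_irreducible_principal R_ne R_wc)[b bG ->].
    by exists (exist _ b bG).
  - by move=> a b; apply: gle_winc_of_principal (valP a) (valP b).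
exists (ideal_fset R); split.
- move=> f /ideal_of_down_closed[sub down]; split=> [x|x y xG]; rewrite !in_ideal_fset.
    exact: sub.
  exact: down.
- move=> f g wf wg /fsetP fg; apply: (ideal_of_inj wf wg) => x.
  by rewrite -!in_ideal_fset fg.
- move=> I I_down; exists (winc_of R (fun x => x \in I)); first exact: winc_of_winc.
  by apply/fsetP => x; rewrite in_ideal_fset ideal_of_winc_of.
Qed.
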